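(* Every indecomposable tournament with at least $5$ vertices having at most one non-critical vertex has an odd number of vertices.
   Context: A tournament $T=(V,A)$: finite vertex set, and for all distinct $x,y$ exactly one of $(x,y),(y,x)$ is an arc; write $x\to y$ for $(x,y)\in A$. $T-x=T[V\setminus\{x\}]$ is the induced subtournament. An interval of $T$ is $I\subseteq V$ such that for every $x\in V\setminus I$, either $x\to a$ for all $a\in I$ or $a\to x$ for all $a\in I$; trivial intervals are $\varnothing$, $V$, singletons; $T$ (with $\geqslant 3$ vertices) is indecomposable if all its intervals are trivial, decomposable otherwise. A vertex $x$ of an indecomposable tournament $T$ is critical if $T-x$ is decomposable, and non-critical otherwise. *)

From mathcomp Require Import all_boot.
Set Implicit Arguments. Unset Strict Implicit. Unset Printing Implicit Defensive.

(* A tournament is given by a vertex set V : {set T} over a finite type T and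
   an arc relation A : rel T ("A x y" means x -> y); only its restriction to V
   matters.  The induced subtournament T[W] for W \subset V is (W, A). *)
Definition is_tournament (T : finType) (A : rel T) (V : {set T}) : Prop :=
  forall x y, x \in V -> y \in V -> x != y -> (A x y (+) A y x).

Definition is_interval (T : finType) (A : rel T) (V I : {set T}) : Prop :=
  I \subset V /\
  forall x, x \in V :\: I ->
    (forall a, a \in I -> A x a) \/ (forall a, a \in I -> A a x).

Definition trivial_interval (T : finType) (V I : {set T}) : Prop :=
  I = set0 \/ I = V \/ exists a, I = [set a].

Definition indecomposable (T : finType) (A : rel T) (V : {set T}) : Prop :=
  3 <= #|V| /\ forall I, is_interval A V I -> trivial_interval V I.

Definition critical (T : finType) (A : rel T) (V : {set T}) (x : T) : Prop :=
  ~ indecomposable A (V :\ x).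

Definition non_critical (T : finType) (A : rel T) (V : {set T}) (x : T) : Prop :=
  x \in V /\ ~ critical A V x.

From mathcomp Require Import all_boot zify.
Set Implicit Arguments. Unset Strict Implicit. Unset Printing Implicit Defensive.

(* By the theorem of Ehrenfeucht and Rozenberg, a primitive (indecomposable)
   part X of a primitive V with at least two vertices outside it extends to a
   primitive X + u + w.  In a primitive tournament every vertex v lies on a
   3-cycle, which is primitive; growing it two vertices at a time preserves
   parity, so when #|V| is even we end with a primitive V - w for some w off
   the cycle, hence w != v.  Starting again from that w gives a second
   non-critical vertex. *)

Section Modules.

Variables (T : finType) (A : rel T).
Implicit Types (I K S V X Y Z : {set T}) (a c p q u w x y z : T).

(* Modules compare arcs in both directions, so they make sense for any
   relation; for tournaments they are the intervals (is_interval_module), and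
   [primitive] is [indecomposable]. *)
Definition arcs x y : bool * bool := (A x y, A y x).

Lemma arcs_flip x y x' y' : arcs x y = arcs x' y' -> arcs y x = arcs y' x'.
Proof. by rewrite /arcs => -[-> ->]. Qed.

Definition is_module Y I : bool :=
  (I \subset Y) && [forall z in Y :\: I, forall p in I, forall q in I, arcs z p == arcs z q].

Lemma is_moduleP Y I :
  reflect (I \subset Y /\ forall z p q, z \in Y -> z \notin I -> p \in I -> q \in I ->
             arcs z p = arcs z q)
          (is_module Y I).
Proof.
apply: (iffP andP) => [[IY /forall_inP HI]|[IY HI]]; split=> //.
  move=> z p q zY zI pI qI; have zYI : z \in Y :\: I by apply/setDP.
  by have /forall_inP/(_ p pI)/forall_inP/(_ q qI)/eqP := HI z zYI.
apply/forall_inP => z /setDP[zY zI].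
by apply/forall_inP => p pI; apply/forall_inP => q qI; apply/eqP/HI.
Qed.

Definition primitive Y : Prop :=
  3 <= #|Y| /\ forall I, is_module Y I -> trivial_interval Y I.

Lemma no_proper_module Y I :
  primitive Y -> is_module Y I -> 2 <= #|I| -> #|I| < #|Y| -> False.
Proof. by move=> [_ trivY] /trivY[->|[->|[a ->]]]; rewrite ?cards0 ?ltnn ?cards1. Qed.

Lemma is_module_restrict Y Z I : is_module Y I -> Z \subset Y -> is_module Z (I :&: Z).
Proof.
move=> /is_moduleP[_ HI] ZY; apply/is_moduleP; split=> [|z p q zZ]; first exact: subsetIr.
rewrite !inE zZ andbT => zI /andP[pI _] /andP[qI _].
by apply: HI => //; apply: (subsetP ZY).
Qed.

Lemma primitive_trace X Y I :
  primitive X -> X \subset Y -> is_module Y I -> trivial_interval X (I :&: X).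
Proof. by move=> [_ trivX] XY HI; apply/trivX/(is_module_restrict HI). Qed.

Lemma setIU1 I Z y : I :&: (y |: Z) = (if y \in I then [set y] else set0) :|: (I :&: Z).
Proof.
apply/setP=> x; rewrite !inE; case: (eqVneq x y) => [->|xy] /=.
  by case: ifP => yI; rewrite !inE ?yI ?eqxx.
by case: ifP; rewrite ?inE ?(negbTE xy).
Qed.

(* For [y \notin X]: [homogeneous X y] says that [y] sees all of [X] alike, and
   [twin X a y] that [y] can replace [a] in [X]; they are [y \in <X>] and
   [y \in X(a)] in the notation of Ehrenfeucht and Rozenberg. *)
Definition homogeneous X y : bool := is_module (y |: X) X.
Definition twin X a y : bool := is_module (y |: X) [set y; a].

Lemma homogeneousP X y :
  y \notin X ->
  reflect (forall p q, p \in X -> q \in X -> arcs y p = arcs y q) (homogeneous X y).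
Proof.
move=> yX; rewrite /homogeneous.
apply: (iffP (is_moduleP _ _)) => [[_ H] p q|H]; first exact/H/yX/setU11.
split=> [|z p q]; first exact: subsetUr.
by case/setU1P=> [->|zX]; [move=> _; apply: H | rewrite zX].
Qed.

Lemma twinP X a y :
  a \in X -> y \notin X ->
  reflect (forall z, z \in X -> z != a -> arcs z a = arcs z y) (twin X a y).
Proof.
move=> aX yX; rewrite /twin; apply: (iffP (is_moduleP _ _)) => [[_ H] z zX za|H].
  by apply: H; rewrite !inE ?eqxx ?orbT ?zX ?(negbTE za) ?(negbTE (memPn yX z zX)).
split=> [|z p q]; first by rewrite subUset !sub1set setU11 setU1r.
case/setU1P=> [->|zX]; first by rewrite !inE eqxx.
rewrite !inE negb_or => /andP[_ za].
by move=> /orP[]/eqP-> /orP[]/eqP->; rewrite ?H.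
Qed.

Lemma homogeneousS X X' y :
  X' \subset X -> y \notin X -> homogeneous X y -> homogeneous X' y.
Proof.
move=> sX yX /(homogeneousP yX) H.
apply/homogeneousP=> [|p q pX qX]; first exact: contra (subsetP sX y) yX.
by apply: H; apply: (subsetP sX).
Qed.

Lemma twinS X X' a y :
  X' \subset X -> a \in X' -> y \notin X -> twin X a y -> twin X' a y.
Proof.
move=> sX aX' yX /(twinP (subsetP sX a aX') yX) H.
apply/twinP=> // [|z zX]; first exact: contra (subsetP sX y) yX.
by apply: H; apply: (subsetP sX).
Qed.

Lemma primitive_not_homogeneous X y :
  y \notin X -> primitive (y |: X) -> ~~ homogeneous X y.
Proof.
move=> yX primY; apply/negP => hY; apply: (no_proper_module primY hY).
  by have := primY.1; rewrite cardsU1 yX.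
by rewrite cardsU1 yX.
Qed.

Lemma primitive_not_twin X a y :
  a \in X -> y \notin X -> primitive (y |: X) -> ~~ twin X a y.
Proof.
move=> aX yX primY; apply/negP => tY; apply: (no_proper_module primY tY).
  by rewrite cards2 (memPnC yX a aX).
by have := primY.1; rewrite cards2 (memPnC yX a aX).
Qed.

Lemma twin_not_homogeneous X a y :
  primitive X -> a \in X -> y \notin X -> twin X a y -> ~~ homogeneous X y.
Proof.
move=> primX aX yX /(twinP aX yX) ty; apply/negP => /(homogeneousP yX) hy.
have ay p : p \in X :\ a -> arcs a p = arcs y p.
  by case/setD1P=> pa pX; apply/arcs_flip/ty.
apply: (no_proper_module primX (I := X :\ a)).
- apply/is_moduleP; split=> [|z p q zX]; first exact: subsetDl.
  rewrite in_setD1 zX andbT negbK => /eqP-> pXa qXa.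
  by rewrite !ay //; apply: hy; apply: (subsetP (subsetDl X [set a])).
- by have := primX.1; rewrite (cardsD1 a X) aX.
- by rewrite (cardsD1 a X) aX.
Qed.

Lemma twin_unique X a c y :
  primitive X -> a \in X -> c \in X -> y \notin X -> twin X a y -> twin X c y -> a = c.
Proof.
move=> primX aX cX yX /(twinP aX yX) ty /(twinP cX yX) ty'.
apply/eqP/negP => /negP ac; apply: (no_proper_module primX (I := [set a; c])).
- apply/is_moduleP; split=> [|z p q zX]; first by rewrite subUset !sub1set aX cX.
  rewrite !inE negb_or => /andP[za zc].
  by move=> /orP[]/eqP-> /orP[]/eqP->; rewrite ?ty ?ty'.
- by rewrite cards2 ac.
- by rewrite cards2 ac; exact: primX.1.
Qed.


Lemma primitive_add1 X y :
  primitive X -> y \notin X -> ~~ homogeneous X y -> (forall a, a \in X -> ~~ twin X a y) ->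
  primitive (y |: X).
Proof.
move=> primX yX hyN tyN; split=> [|I HI]; first by rewrite cardsU1 yX ltnW // ltnS primX.1.
have /andP[IY _] := HI; have trI := primitive_trace primX (subsetUr [set y] X) HI.
move: HI; have -> : I = (if y \in I then [set y] else set0) :|: (I :&: X).
  by rewrite -setIU1; apply/esym/setIidPl.
case: trI => [->|[->|[c IXc]]]; case: (y \in I); rewrite ?set0U ?setU0 => HI.
- by right; right; exists y.
- by left.
- by right; left.
- by case/negP: hyN.
- have cX : c \in X by have /setIP[] : c \in I :&: X by rewrite IXc set11.
  by rewrite IXc in HI; case/negP: (tyN c cX).
- by rewrite IXc; right; right; exists c.
Qed.

(* A module of [u |: (w |: X)] meets the primitive [X] in [set0], [X] or a
   singleton, which leaves these seven sets as the only non-trivial candidates. *)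
Lemma primitive_add2 X u w :
  primitive X -> u \notin X -> w \notin X -> u != w ->
  ~~ is_module (u |: (w |: X)) [set u; w] -> ~~ is_module (u |: (w |: X)) X ->
  ~~ is_module (u |: (w |: X)) (u |: X) -> ~~ is_module (u |: (w |: X)) (w |: X) ->
  (forall c, c \in X -> ~~ is_module (u |: (w |: X)) [set u; c]) ->
  (forall c, c \in X -> ~~ is_module (u |: (w |: X)) [set w; c]) ->
  (forall c, c \in X -> ~~ is_module (u |: (w |: X)) (u |: [set w; c])) ->
  primitive (u |: (w |: X)).
Proof.
move=> primX uX wX uw Nuw NX NuX NwX Nuc Nwc Nuwc.
have XY : X \subset u |: (w |: X) by rewrite setUA subsetUr.
split=> [|I HI]; first exact: leq_trans primX.1 (subset_leq_card XY).
have /andP[IY _] := HI; have trI := primitive_trace primX XY HI.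
move: HI; have -> : I = (if u \in I then [set u] else set0) :|:
                       ((if w \in I then [set w] else set0) :|: (I :&: X)).
  by rewrite -!setIU1; apply/esym/setIidPl.
case: trI => [->|[->|[c IXc]]].
- case: (u \in I); case: (w \in I); rewrite ?set0U ?setU0 => HI.
  + by case/negP: Nuw.
  + by right; right; exists u.
  + by right; right; exists w.
  + by left.
- case: (u \in I); case: (w \in I); rewrite ?set0U => HI.
  + by right; left.
  + by case/negP: NuX.
  + by case/negP: NwX.
  + by case/negP: NX.
have cX : c \in X by have /setIP[] : c \in I :&: X by rewrite IXc set11.
rewrite IXc; case: (u \in I); case: (w \in I); rewrite ?set0U => HI.
- by case/negP: (Nuwc c cX).
- by case/negP: (Nuc c cX).
- by case/negP: (Nwc c cX).
- by right; right; exists c.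
Qed.

Lemma primitive_add2_twin X a u w :
  primitive X -> a \in X -> u \notin X -> w \notin X ->
  twin X a u -> ~~ twin X a w -> arcs w a != arcs w u -> primitive (u |: (w |: X)).
Proof.
move=> primX aX uX wX tu twN awu; have ty := twinP aX uX tu.
have uw : u != w by apply: contraNneq twN => <-.
have inY z : z \in X -> z \in u |: (w |: X) by move=> zX; rewrite !inE zX !orbT.
have uY : u \in u |: (w |: X) by rewrite setU11.
have wY : w \in u |: (w |: X) by rewrite !inE eqxx orbT.
apply: primitive_add2 => // [||||c cX|c cX|c cX]; apply/negP => /is_moduleP[_ H].
- case/negP: twN; apply/twinP => // z zX za.
  rewrite ty //; apply: H; rewrite ?inY ?set21 ?set22 //.
  by rewrite !inE negb_or (memPn uX z zX) (memPn wX z zX).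
- case/negP: (twin_not_homogeneous primX aX uX tu).
  by apply/(homogeneousP uX) => p q pX qX; apply: H.
- by case/negP: awu; apply/eqP/H; rewrite // !inE ?aX ?eqxx ?orbT // negb_or eq_sym uw.
- case/negP: (twin_not_homogeneous primX aX uX tu).
  apply/(homogeneousP uX) => p q pX qX.
  by apply: H; rewrite // !inE ?pX ?qX ?orbT // negb_or uw.
- have tcu : twin X c u.
    apply/twinP => // z zX zc; apply: H; rewrite ?inY ?set21 ?set22 //.
    by rewrite !inE negb_or (memPn uX z zX) zc.
  move: H; rewrite -(twin_unique primX aX cX uX tu tcu) => H.
  case/negP: awu; apply/eqP/H; rewrite ?set21 ?set22 //.
  by rewrite !inE negb_or eq_sym uw (memPnC wX a aX).
- have tcw : twin X c w.
    apply/twinP => // z zX zc; apply: H; rewrite ?inY ?set21 ?set22 //.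
    by rewrite !inE negb_or (memPn wX z zX) zc.
  have ca : c != a by apply: contraNneq twN => <-.
  have e1 : arcs u w = arcs u c.
    by apply: H; rewrite ?set21 ?set22 // !inE negb_or uw (memPnC uX c cX).
  have e2 : arcs c a = arcs c u := ty c cX ca.
  have e3 : arcs a c = arcs a w by apply: (twinP cX wX tcw); rewrite // eq_sym.
  by case/negP: awu; rewrite -(arcs_flip e3) e2 (arcs_flip e1).
- have tcu : twin X c u.
    apply/twinP => // z zX zc; apply: H; rewrite ?inY ?setU11 //.
      by rewrite !inE !negb_or (memPn uX z zX) (memPn wX z zX) zc.
    by rewrite !inE eqxx !orbT.
  move: H; rewrite -(twin_unique primX aX cX uX tu tcu) => H.
  case/negP: twN; apply/twinP => // z zX za; rewrite ty //; apply: H.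
  + exact: inY.
  + by rewrite !inE !negb_or (memPn uX z zX) (memPn wX z zX) za.
  + exact: setU11.
  + by rewrite !inE eqxx orbT.
Qed.

Lemma primitive_add2_ext X u w p :
  u \notin X -> w \notin X -> p \in X -> primitive (u |: X) -> primitive (w |: X) ->
  arcs u p != arcs w p -> primitive (u |: (w |: X)).
Proof.
move=> uX wX pX primU primW upw.
have wU : w \notin u |: X.
  by rewrite !inE negb_or wX andbT; apply: contraNneq upw => ->.
rewrite setUCA; apply: primitive_add1 => // [|b].
  apply: contra (primitive_not_homogeneous wX primW).
  exact: homogeneousS (subsetUr [set u] X) wU.
case/setU1P=> [->|bX].
  apply/negP => /(twinP (setU11 u X) wU) tw.
  have pu : p != u by apply: contraNneq uX => <-.
  by case/negP: upw; rewrite (arcs_flip (tw p (setU1r u pX) pu)).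
apply: contra (primitive_not_twin bX wX primW).
exact: twinS (subsetUr [set u] X) bX wU.
Qed.

Lemma primitive_add2_ext_homogeneous X u w p :
  primitive X -> u \notin X -> w \notin X -> p \in X -> primitive (u |: X) ->
  homogeneous X w -> arcs w p != arcs w u -> primitive (u |: (w |: X)).
Proof.
move=> primX uX wX pX primU hw wpu; have hwP := homogeneousP wX hw.
have wU : w \notin u |: X.
  rewrite !inE negb_or wX andbT; apply: contraTneq hw => ->.
  exact: primitive_not_homogeneous.
rewrite setUCA; apply: primitive_add1 => // [|b].
  by apply/negP => /(homogeneousP wU) H; case/negP: wpu; rewrite (H p u) ?setU11 ?setU1r.
case/setU1P=> [->|bX]; apply/negP.
  move=> /(twinP (setU11 u X) wU) tw.
  case/negP: (primitive_not_homogeneous uX primU); apply/homogeneousP => // p' q pX' qX.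
  have pu : p' != u by apply: contraNneq uX => <-.
  have qu : q != u by apply: contraNneq uX => <-.
  rewrite (arcs_flip (tw p' (setU1r u pX') pu)) (arcs_flip (tw q (setU1r u qX) qu)).
  exact: hwP.
move=> /(twinS (subsetUr [set u] X) bX wU) tw.
by rewrite (negbTE (twin_not_homogeneous primX bX wX tw)) in hw.
Qed.

Lemma primitive_split V K p :
  primitive V -> K \subset V -> 2 <= #|K| -> #|K| < #|V| ->
  exists2 z, z \in V :\: K & exists2 k, k \in K & arcs z k != arcs z p.
Proof.
move=> primV KV K2 KV1.
case/boolP: [exists z in V :\: K, exists k in K, arcs z k != arcs z p].
  by case/exists_inP=> z zVK /exists_inP[k kK zkp]; exists z => //; exists k.
move/exists_inPn=> same; case: (no_proper_module primV _ K2 KV1).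
apply/is_moduleP; split=> // z q q' zV zK qK q'K.
have zVK : z \in V :\: K by apply/setDP.
have /exists_inPn samez := same z zVK.
by rewrite (eqP (negbNE (samez q qK))) (eqP (negbNE (samez q' q'K))).
Qed.

Lemma primitive_complement_disagree V X u p0 :
  primitive V -> X \subset V -> p0 \in X -> 2 <= #|V :\: X| ->
  exists2 e, e \in V :\: X & [exists p in X, arcs e p != arcs u p].
Proof.
move=> primV XV p0X VX2.
case/boolP: [exists e in V :\: X, exists p in X, arcs e p != arcs u p] => [/exists_inP//|].
move/exists_inPn=> agree; case: (no_proper_module primV _ VX2).
  apply/is_moduleP; split=> [|z e f zV]; first exact: subsetDl.
  rewrite inE zV andbT negbK => zX eVX fVX.
  have /exists_inPn agree_e := agree e eVX; have /exists_inPn agree_f := agree f fVX.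
  apply: arcs_flip; rewrite (eqP (negbNE (agree_e z zX))).
  exact/esym/eqP/negbNE/agree_f.
apply: proper_card; apply/properP; split; first exact: subsetDl.
by exists p0; [exact: subsetP XV p0 p0X | rewrite inE p0X].
Qed.

Lemma ehrenfeucht_rozenberg_twin V X a y :
  primitive V -> X \subset V -> primitive X -> a \in X -> y \in V :\: X -> twin X a y ->
  exists u w, [/\ u \in V :\: X, w \in V :\: X, u != w & primitive (u |: (w |: X))].
Proof.
move=> primV XV primX aX yVX ty.
set B := a |: [set b in V :\: X | twin X a b].
have BV : B \subset V.
  by apply/subsetP => b /setU1P[->|]; [exact: subsetP XV a aX | rewrite inE => /andP[/setDP[]]].
have B2 : 2 <= #|B|.
  have ay : a != y by have /setDP[_ yX] := yVX; exact: memPn yX a aX.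
  have <- : #|[set a; y]| = 2 by rewrite cards2 ay.
  by rewrite subset_leq_card // subUset !sub1set setU11 setU1r // inE yVX ty.
have BV1 : #|B| < #|V|.
  have : 0 < #|X :\ a| by have := primX.1; rewrite (cardsD1 a X) aX; lia.
  case/card_gt0P=> c /setD1P[ca cX]; apply: proper_card; apply/properP; split=> //.
  by exists c; [exact: subsetP XV c cX | rewrite !inE (negbTE ca) cX].
have [z /setDP[zV zB] [b bB zba]] := primitive_split a primV BV B2 BV1.
have ba : b != a by apply: contraNneq zba => ->.
move: bB; rewrite in_setU1 (negbTE ba) in_set => /andP[bVX tb]; have /setDP[bV bX] := bVX.
have zX : z \notin X.
  apply: contraNN zba => zX; have za : z != a by apply: contraNneq zB => ->; exact: setU11.
  by rewrite (twinP aX bX tb z zX za).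
have zVX : z \in V :\: X by apply/setDP.
have tzN : ~~ twin X a z by apply: contraNN zB => tz; rewrite in_setU1 in_set zVX tz orbT.
exists b, z; split=> //; first by apply: contraNneq zB => <-; rewrite in_setU1 in_set bVX tb orbT.
by apply: primitive_add2_twin primX aX bX zX tb tzN _; rewrite eq_sym.
Qed.

Lemma ehrenfeucht_rozenberg_ext V X u :
  primitive V -> X \subset V -> primitive X -> 2 <= #|V :\: X| ->
  (forall a y, a \in X -> y \in V :\: X -> ~~ twin X a y) ->
  u \in V :\: X -> ~~ homogeneous X u ->
  exists u w, [/\ u \in V :\: X, w \in V :\: X, u != w & primitive (u |: (w |: X))].
Proof.
move=> primV XV primX VX2 twinN uVX huN.
have ext y : y \in V :\: X -> ~~ homogeneous X y -> primitive (y |: X).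
  move=> yVX hyN; have /setDP[_ yX] := yVX.
  by apply: primitive_add1 => // a aX; apply: twinN.
set W := [set e in V :\: X | [forall p in X, arcs e p == arcs u p]].
have [p0 p0X] : exists p0, p0 \in X by apply/card_gt0P; apply: leq_trans primX.1.
have KV : X :|: W \subset V.
  by rewrite subUset XV; apply/subsetP => e; rewrite inE => /andP[/setDP[]].
have KV1 : #|X :|: W| < #|V|.
  have [e eVX /exists_inP[p pX epu]] := primitive_complement_disagree u primV XV p0X VX2.
  have /setDP[eV eX] := eVX; apply: proper_card; apply/properP; split=> //; exists e => //.
  by rewrite in_setU negb_or eX in_set eVX negb_forall_in; apply/exists_inP; exists p.
have K2 : 2 <= #|X :|: W| by apply: leq_trans (ltnW primX.1) (subset_leq_card (subsetUl X W)).
have [z /setDP[zV zK] [k kK zkp]] := primitive_split p0 primV KV K2 KV1.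
have [zX zW] : z \notin X /\ z \notin W by apply/norP; rewrite -in_setU.
have zVX : z \in V :\: X by apply/setDP.
case/boolP: (homogeneous X z) => [hz|hzN].
  have kX : k \notin X by apply: contraNN zkp => kX; rewrite (homogeneousP zX hz k p0).
  move: kK; rewrite in_setU (negbTE kX) in_set => /andP[kVX /forall_inP agree].
  have hkN : ~~ homogeneous X k.
    apply: contraNN huN => /(homogeneousP kX) hk; apply/homogeneousP => [|p q pX qX].
      by case/setDP: uVX.
    by rewrite -(eqP (agree p pX)) -(eqP (agree q qX)); apply: hk.
  exists k, z; split=> //.
    by apply: contraNneq zW => <-; rewrite in_set kVX; apply/forall_inP.
  by apply: primitive_add2_ext_homogeneous primX _ zX p0X (ext k kVX hkN) hz _;
    [case/setDP: kVX | rewrite eq_sym].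
have [p pX zpu] : exists2 p, p \in X & arcs z p != arcs u p.
  by apply/exists_inP; move: zW; rewrite inE zVX /= negb_forall_in.
exists u, z; split=> //; first by apply: contraNneq zW => <-; rewrite in_set uVX; apply/forall_inP.
have /setDP[_ uX] := uVX.
by apply: primitive_add2_ext uX zX pX (ext u uVX huN) (ext z zVX hzN) _; rewrite eq_sym.
Qed.

Theorem ehrenfeucht_rozenberg V X :
  primitive V -> X \subset V -> primitive X -> 2 <= #|V :\: X| ->
  exists u w, [/\ u \in V :\: X, w \in V :\: X, u != w & primitive (u |: (w |: X))].
Proof.
move=> primV XV primX VX2.
case/boolP: [exists a in X, exists y in V :\: X, twin X a y].
  by case/exists_inP=> a aX /exists_inP[y yVX ty]; exact: ehrenfeucht_rozenberg_twin ty.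
move/exists_inPn=> twinN.
case/boolP: [exists u in V :\: X, ~~ homogeneous X u].
  case/exists_inP=> u uVX huN; apply: ehrenfeucht_rozenberg_ext uVX huN => // a y aX.
  by move/exists_inPn: (twinN a aX); apply.
move/exists_inPn=> hom; case: (no_proper_module primV (I := X)).
- apply/is_moduleP; split=> // z p q zV zX.
  have zVX : z \in V :\: X by apply/setDP.
  exact: (homogeneousP zX (negbNE (hom z zVX))).
- exact: ltnW primX.1.
- by rewrite -subn_gt0 -cardsDS //; apply: leq_trans VX2.
Qed.

Lemma primitive_deletion V S :
  primitive V -> S \subset V -> primitive S -> odd #|V :\: S| ->
  exists2 w, w \in V :\: S & primitive (V :\ w).
Proof.
move=> primV; have [n] := ubnP #|V :\: S|; elim: n S => // n IH S ltVSn SV primS oddVS.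
case: (ltnP 1 #|V :\: S|) => [VS2|VS1].
  have [u [w [/setDP[uV uS] /setDP[wV wS] uw primY]]] := ehrenfeucht_rozenberg primV SV primS VS2.
  have YV : u |: (w |: S) \subset V by rewrite !subUset !sub1set uV wV SV.
  have cardY : #|V :\: (u |: (w |: S))| = #|V :\: S| - 2.
    rewrite !cardsDS // !cardsU1 in_setU1 negb_or uw uS wS; lia.
  have ltYn : #|V :\: (u |: (w |: S))| < n by rewrite cardY; lia.
  have oddY : odd #|V :\: (u |: (w |: S))| by rewrite cardY oddB // oddVS.
  have [w' /setDP[w'V w'Y] primVw'] := IH _ ltYn YV primY oddY.
  exists w' => //; apply/setDP; split=> //.
  by apply: contra w'Y => /(subsetP (subsetU1 _ _)) /setU1r.
have /cards1P[w VSw] : #|V :\: S| == 1 by rewrite eqn_leq VS1 lt0n; apply: contraTneq oddVS => ->.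
exists w; first by rewrite VSw set11.
by rewrite -VSw setDDr setDv set0U (setIidPr SV).
Qed.

Lemma primitive_3cycle x y z :
  A x y -> A y z -> A z x -> ~~ A y x -> ~~ A z y -> ~~ A x z -> primitive (x |: [set y; z]).
Proof.
move=> Axy Ayz Azx Nyx Nzy Nxz.
have neq u v : A u v -> ~~ A v u -> (u == v) = false.
  by move=> Auv; apply: contraNF => /eqP e; rewrite -e in Auv *.
have xy := neq _ _ Axy Nyx; have yz := neq _ _ Ayz Nzy; have zx := neq _ _ Azx Nxz.
have yx : (y == x) = false by rewrite eq_sym.
have zy : (z == y) = false by rewrite eq_sym.
have xz : (x == z) = false by rewrite eq_sym.
split=> [|I HI]; first by rewrite !cardsU1 cards1 !inE xy yz xz.
have /andP[IS _] := HI; move: HI.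
have -> : I = (if x \in I then [set x] else set0) :|:
              ((if y \in I then [set y] else set0) :|: (if z \in I then [set z] else set0)).
  have {1}-> : I = I :&: (x |: (y |: (z |: set0))) by rewrite setU0; apply/esym/setIidPl.
  by rewrite !setIU1 setI0 setU0.
case: (x \in I); case: (y \in I); case: (z \in I); rewrite ?set0U ?setU0 => HI.
- by right; left.
- case/is_moduleP: HI => _ /(_ z x y); rewrite /arcs Azx Ayz (negbTE Nxz) (negbTE Nzy).
  by rewrite !inE zx zy !eqxx !orbT => /(_ isT isT isT isT).
- case/is_moduleP: HI => _ /(_ y x z); rewrite /arcs Axy Ayz (negbTE Nyx) (negbTE Nzy).
  by rewrite !inE yx yz !eqxx !orbT => /(_ isT isT isT isT).
- by right; right; exists x.
- case/is_moduleP: HI => _ /(_ x y z); rewrite /arcs Axy Azx (negbTE Nyx) (negbTE Nxz).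
  by rewrite !inE xy xz !eqxx !orbT => /(_ isT isT isT isT).
- by right; right; exists y.
- by right; right; exists z.
- by left.
Qed.

End Modules.

Section Tournaments.

Variables (T : finType) (A : rel T) (V : {set T}).
Hypothesis tourV : is_tournament A V.
Implicit Types (I K S Y : {set T}) (v x y : T).

Lemma tournamentN x y : x \in V -> y \in V -> x != y -> A y x = ~~ A x y.
Proof. by move=> xV yV xy; move: (tourV xV yV xy); case: (A x y); case: (A y x). Qed.

Lemma is_interval_module Y I : Y \subset V -> is_interval A Y I <-> is_module A Y I.
Proof.
move=> YV; have inV := subsetP YV.
split=> [[IY H]|/is_moduleP[IY H]].
  apply/is_moduleP; split=> // z p q zY zI pI qI.
  have zYI : z \in Y :\: I by apply/setDP.
  have tN r : r \in I -> A r z = ~~ A z r.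
    move=> rI; apply: tournamentN; [exact: inV | exact/inV/(subsetP IY) | exact: memPnC zI r rI].
  rewrite /arcs !tN //; case: (H z zYI) => Hz; first by rewrite !Hz.
  by move: (Hz p pI) (Hz q qI); rewrite !tN // => /negbTE-> /negbTE->.
split=> // z /setDP[zY zI]; case: (set_0Vmem I) => [->|[p0 p0I]]; first by left => a; rewrite inE.
have zp0 : z != p0 by rewrite (memPnC zI).
case Az: (A z p0); [left | right] => a aI; have := H z a p0 zY zI aI p0I.
  by rewrite /arcs Az => -[].
by rewrite /arcs (tournamentN (inV z zY) (inV p0 (subsetP IY p0 p0I)) zp0) Az => -[_ ->].
Qed.

Lemma indecomposable_primitive Y : Y \subset V -> indecomposable A Y <-> primitive A Y.
Proof. by move=> YV; split=> -[Y3 H]; split=> // I /(is_interval_module I YV)/H. Qed.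

Lemma no_triangle_through_card v :
  primitive A V -> v \in V ->
  (forall p q, p \in V :\ v -> q \in V :\ v -> A v p -> A q v -> ~~ A p q) -> #|V| <= 3.
Proof.
move=> primV vV noPN.
(* Otherwise the out- and in-neighbourhoods of [v] are intervals of [V]. *)
set O := [set p in V :\ v | A v p]; set N := [set q in V :\ v | A q v].
have small K : K \subset V :\ v -> is_interval A V K -> #|K| <= 1.
  move=> Kv /(is_interval_module K (subxx V)) modK; rewrite leqNgt; apply/negP => K2.
  apply: (no_proper_module primV modK K2); apply: leq_ltn_trans (subset_leq_card Kv) _.
  by rewrite (cardsD1 v V) vV.
have Vv x : x \in V :\ v -> x \in V by case/setD1P.
have O1 : #|O| <= 1.
  have Ov : O \subset V :\ v by apply/subsetP => x; rewrite in_set => /andP[].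
  apply: small => //; split=> [|z /setDP[zV zO]]; first exact: subset_trans Ov (subsetDl V _).
  left=> r; rewrite in_set => /andP[rVv Avr]; case: (eqVneq z v) => [-> //|zv].
  have zVv : z \in V :\ v by apply/setD1P.
  have Azv : A z v by move: zO; rewrite in_set zVv (tournamentN vV zV) // eq_sym.
  have zr : z != r by apply: contraNneq zO => ->; rewrite in_set rVv.
  by rewrite (tournamentN (Vv r rVv) zV) ?(noPN r z) // eq_sym.
have N1 : #|N| <= 1.
  have Nv : N \subset V :\ v by apply/subsetP => x; rewrite in_set => /andP[].
  apply: small => //; split=> [|z /setDP[zV zN]]; first exact: subset_trans Nv (subsetDl V _).
  right=> r; rewrite in_set => /andP[rVv Arv]; case: (eqVneq z v) => [-> //|zv].
  have zVv : z \in V :\ v by apply/setD1P.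
  have Avz : A v z by move: zN; rewrite in_set zVv (tournamentN zV vV zv).
  have zr : z != r by apply: contraNneq zN => ->; rewrite in_set rVv.
  by rewrite (tournamentN zV (Vv r rVv) zr) (noPN z r).
have : V \subset v |: (O :|: N).
  apply/subsetP => x xV; case: (eqVneq x v) => [->|xv]; first exact: setU11.
  rewrite !inE (negbTE xv) xV /=.
  by move: (tourV vV xV); rewrite eq_sym => /(_ xv); case: (A v x); case: (A x v).
by move/subset_leq_card; rewrite cardsU1; have := cardsUI O N; lia.
Qed.

Lemma primitive_triangle_through v :
  primitive A V -> v \in V -> exists S, [/\ S \subset V, v \in S, #|S| = 3 & primitive A S].
Proof.
move=> primV vV.
case/boolP: [exists p in V :\ v, exists q in V :\ v, [&& A v p, A q v & A p q]]; last first.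
  move/exists_inPn=> noPN; exists V; split=> //; apply/eqP; rewrite eqn_leq primV.1 andbT.
  apply: (no_triangle_through_card primV vV) => p q pVv qVv Avp Aqv.
  by have /exists_inPn/(_ q qVv) := noPN p pVv; rewrite Avp Aqv.
case/exists_inP=> p /setD1P[pv pV] /exists_inP[q /setD1P[qv qV] /and3P[Avp Aqv Apq]].
have Npv : ~~ A p v by rewrite (tournamentN vV pV) ?negbK // eq_sym.
have Nvq : ~~ A v q by rewrite (tournamentN qV vV) ?negbK.
have pq : p != q by apply: contraNneq Npv => ->.
have Nqp : ~~ A q p by rewrite (tournamentN pV qV pq) negbK.
have primS := primitive_3cycle Avp Apq Aqv Npv Nqp Nvq.
exists (v |: [set p; q]); split=> //; first by rewrite !subUset !sub1set vV pV qV.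
  exact: setU11.
by apply/eqP; rewrite eqn_leq primS.1 andbT !cardsU1 cards1; lia.
Qed.

Lemma even_noncritical_neq v :
  indecomposable A V -> ~~ odd #|V| -> v \in V -> exists2 w, w != v & non_critical A V w.
Proof.
move=> /(indecomposable_primitive (subxx V)) primV evenV vV.
have [S [SV vS S3 primS]] := primitive_triangle_through primV vV.
have oddVS : odd #|V :\: S|.
  by rewrite cardsDS // S3 oddB ?(negbTE evenV) // -S3 subset_leq_card.
have [w /setDP[wV wS] primVw] := primitive_deletion primV SV primS oddVS.
exists w; first by apply: contraNneq wS => ->.
by split=> // crit; apply/crit/(indecomposable_primitive (subsetDl V [set w])).
Qed.

End Tournaments.

Theorem mainTheorem9 (T : finType) (A : rel T) (V : {set T}) :
  is_tournament A V ->
  indecomposable A V ->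
  5 <= #|V| ->
  (forall x y, non_critical A V x -> non_critical A V y -> x = y) ->
  odd #|V|.
Proof.
move=> tourV indV _ unique_noncritical; apply/contraT => evenV.
have [v vV] : exists v, v \in V by apply/card_gt0P; apply: leq_trans indV.1.
have [w1 _ nc1] := even_noncritical_neq tourV indV evenV vV.
have [w2 w21 nc2] := even_noncritical_neq tourV indV evenV nc1.1.
by rewrite (unique_noncritical _ _ nc2 nc1) eqxx in w21.
Qed.
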